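(* Let $M$ be a nonuniform matroid on a finite set $S$. Then $M$ is irreducible with respect to free product if and only if the lattice $\mathcal D(M)$ contains no nontrivial pinchpoint.
   Context: For a matroid $M$ on $S$ write $\rho_M$ for its rank function, $\rho(M)=\rho_M(S)$, $\nu_M(A)=|A|-\rho_M(A)$, $\lambda_M(A)=\rho(M)-\rho_M(A)$. For matroids $M$ on $S$ and $N$ on $T$ with $S\cap T=\emptyset$, the free product $M\mathbin{\Box} N$ is the matroid on $S\cup T$ whose independent sets are those $A$ with $A\cap S$ independent in $M$ and $\lambda_M(A\cap S)\geq\nu_N(A\cap T)$; it is associative. A nonempty matroid $M$ is irreducible if every factorization of $M$ as a free product of matroids contains $M$ itself as a factor. A cyclic flat is a flat that is a union of circuits. $\mathcal D(M)$ is the complete sublattice of the Boolean algebra $2^S$ generated by all cyclic flats of $M$ (closed under arbitrary unions and intersections, so it contains $\emptyset$ as the empty union and $S$ as the empty intersection). An element $x$ of a poset $P$ is a pinchpoint if every element of $P$ is comparable to $x$; it is nontrivial if it is neither minimal nor maximal in $P$. *)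

From mathcomp Require Import all_boot.
Set Implicit Arguments. Unset Strict Implicit. Unset Printing Implicit Defensive.

Section Matroids.
Variable U : finType.

(* A matroid is given by its ground set E and its family I of independent sets. *)
Definition mat := ({set U} * {set {set U}})%type.

Definition is_matroid (M : mat) : Prop :=
  [/\ forall A : {set U}, A \in M.2 -> A \subset M.1,
      set0 \in M.2,
      forall A B : {set U}, B \in M.2 -> A \subset B -> A \in M.2 &
      forall A B : {set U}, A \in M.2 -> B \in M.2 -> #|A| < #|B| ->
        exists2 x, x \in B :\: A & x |: A \in M.2].

Definition rk (M : mat) (A : {set U}) : nat :=
  \max_(B in M.2 | B \subset A) #|B|.

Definition rkM (M : mat) : nat := rk M M.1.
Definition nullity (M : mat) (A : {set U}) : nat := #|A| - rk M A.
Definition lambda (M : mat) (A : {set U}) : nat := rkM M - rk M A.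

(* Free product M [] N (for disjoint ground sets) *)
Definition free_product (M N : mat) : mat :=
  (M.1 :|: N.1,
   [set A : {set U} | [&& A \subset M.1 :|: N.1, A :&: M.1 \in M.2 &
                         nullity N (A :&: N.1) <= lambda M (A :&: M.1)]]).

Definition empty_mat : mat := (set0, [set set0]).

Fixpoint free_product_seq (s : seq mat) : mat :=
  match s with
  | [::] => empty_mat
  | M :: s' => free_product M (free_product_seq s')
  end.

Fixpoint disjoint_grounds (s : seq mat) : Prop :=
  match s with
  | [::] => True
  | M :: s' => [disjoint M.1 & (free_product_seq s').1] /\ disjoint_grounds s'
  end.

Definition irreducible (M : mat) : Prop :=
  M.1 != set0 /\
  forall s : seq mat, (forall N, N \in s -> is_matroid N) ->
    disjoint_grounds s -> free_product_seq s = M -> M \in s.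

Definition uniform (M : mat) : Prop :=
  exists r : nat, M.2 = [set A : {set U} | (A \subset M.1) && (#|A| <= r)].

Definition circuit (M : mat) (C : {set U}) : Prop :=
  [/\ C \subset M.1, C \notin M.2 & forall x, x \in C -> C :\ x \in M.2].

Definition flat (M : mat) (F : {set U}) : Prop :=
  F \subset M.1 /\ forall x, x \in M.1 :\: F -> rk M F < rk M (x |: F).

Definition cyclic (M : mat) (F : {set U}) : Prop :=
  forall x, x \in F -> exists C, [/\ circuit M C, x \in C & C \subset F].

Definition cyclic_flat (M : mat) (F : {set U}) : Prop := flat M F /\ cyclic M F.

(* complete sublattice of 2^E: closed under arbitrary unions and
   intersections (empty union = set0, empty intersection = E) *)
Definition complete_sublattice (E : {set U}) (Fam : {set {set U}}) : Prop :=
  [/\ forall X, X \in Fam -> X \subset E,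
      forall P : {set {set U}}, P \subset Fam -> \bigcup_(X in P) X \in Fam &
      forall P : {set {set U}}, P \subset Fam -> E :&: \bigcap_(X in P) X \in Fam].

(* D(M): the complete sublattice of 2^E generated by the cyclic flats *)
Definition inD (M : mat) (X : {set U}) : Prop :=
  forall Fam : {set {set U}}, complete_sublattice M.1 Fam ->
    (forall F, cyclic_flat M F -> F \in Fam) -> X \in Fam.

Definition nontrivial_pinchpoint (M : mat) (X : {set U}) : Prop :=
  [/\ inD M X,
      forall Y, inD M Y -> (Y \subset X) || (X \subset Y),
      exists2 Y, inD M Y & Y \proper X &
      exists2 Y, inD M Y & X \proper Y].

End Matroids.

From mathcomp Require Import all_boot zify.
From Stdlib Require Import Classical ClassicalEpsilon.

(* If M = N [] Q with ground sets S and T, then the rank of Y in M is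
   min (rho_N (Y :&: S) + |Y :&: T|, rho(N) + rho_Q (Y :&: T)).  A point t of T
   in a cyclic flat Z lies on a circuit inside Z, so deleting it does not lower
   the rank; hence the second term is the active one at Z, and then no point of
   S can raise the rank of Z.  So every cyclic flat is comparable with S, which
   propagates to the complete lattice D(M) they generate.  As M is not uniform,
   it has a cyclic flat other than set0 and E, and the largest member of D(M)
   below S (or the smallest one above S) is a nontrivial pinchpoint.
   Conversely, a nontrivial pinchpoint X is comparable with every cyclic flat,
   and this is exactly what makes M the free product of M|X and M/X. *)

Section Matroids.
Set Implicit Arguments. Unset Strict Implicit. Unset Printing Implicit Defensive.

Variable U : finType.
Implicit Types (M N Q : mat U) (A B C D E F J K S T X Y Z : {set U}) (P : {set {set U}}).

Lemma indep_leq_rk M B Y : B \in M.2 -> B \subset Y -> #|B| <= rk M Y.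
Proof. by move=> indB subBY; apply: (bigmax_sup B); rewrite ?indB ?subBY. Qed.

Lemma rk_leq_card M Y : rk M Y <= #|Y|.
Proof. by apply/bigmax_leqP => B /andP[_]; apply: subset_leq_card. Qed.

Lemma subset_leq_rk M Y1 Y2 : Y1 \subset Y2 -> rk M Y1 <= rk M Y2.
Proof.
move=> sub12; apply/bigmax_leqP => B /andP[indB subB].
exact: indep_leq_rk (subset_trans subB sub12).
Qed.

Lemma rk_indep M A : A \in M.2 -> rk M A = #|A|.
Proof. by move=> indA; apply/eqP; rewrite eqn_leq rk_leq_card indep_leq_rk. Qed.

Definition basis M X := [arg max_(B > set0 | (B \in M.2) && (B \subset X)) #|B|].

Lemma basis_spec M X : set0 \in M.2 ->
  [/\ basis M X \in M.2, basis M X \subset X & #|basis M X| = rk M X].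
Proof.
move=> ind0; rewrite /basis; case: arg_maxnP => [|B /andP[indB subB] maxB].
  by rewrite ind0 sub0set.
split=> //; apply/eqP; rewrite eqn_leq indep_leq_rk //=.
by apply/bigmax_leqP => C; apply: maxB.
Qed.

Lemma nullity_eq0 M A : set0 \in M.2 -> (nullity M A == 0) = (A \in M.2).
Proof.
move=> ind0; rewrite /nullity subn_eq0; apply/idP/idP => [leA|indA]; last first.
  by rewrite rk_indep.
have [indB subB cardB] := basis_spec A ind0.
have /eqP <- : basis M A == A by rewrite eqEcard subB cardB.
exact: indB.
Qed.

Lemma card_setI_disjointU A S T : A \subset S :|: T -> [disjoint S & T] ->
  #|A| = #|A :&: S| + #|A :&: T|.
Proof.
move=> subA disjST; rewrite -(cardsID S A); congr (_ + _); apply: eq_card => x.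
rewrite !inE; case xA: (x \in A); rewrite ?andbF ?andbT //; case xS: (x \in S) => /=.
  by rewrite (disjointFr disjST xS).
by move/subsetP: subA => /(_ x xA); rewrite inE xS.
Qed.

Lemma cardsU_disjoint A B : [disjoint A & B] -> #|A :|: B| = #|A| + #|B|.
Proof. by move=> disjAB; apply/eqP; rewrite (leq_card_setU A B).2. Qed.

Lemma setIUl_disjoint A B S T : [disjoint S & T] -> A \subset S -> B \subset T ->
  (A :|: B) :&: S = A.
Proof.
move=> disjST subA subB; have disjBS : [disjoint B & S].
  by apply: disjointWl subB _; rewrite disjoint_sym.
by rewrite setIUl (setIidPl subA) (disjoint_setI0 disjBS) setU0.
Qed.

Lemma exists_subset_card Y k :
  k <= #|Y| -> exists2 V : {set U}, V \subset Y & #|V| = k.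
Proof.
move=> leqk; exists [set x in take k (enum Y)].
  by apply/subsetP => x; rewrite inE => /mem_take; rewrite mem_enum.
rewrite cardsE; have /card_uniqP -> := take_uniq k (enum_uniq (mem Y)).
by rewrite size_take -cardE; case: ltngtP leqk => // ->.
Qed.

Lemma dependent_circuit M D : D \subset M.1 -> D \notin M.2 ->
  exists2 C, circuit M C & C \subset D.
Proof.
move=> subD depD.
have [|C /andP[subCD depC] minC] :=
  @arg_minnP _ D (fun C => (C \subset D) && (C \notin M.2)) (fun C => #|C|).
  by rewrite subxx depD.
exists C => //; split=> //; first exact: subset_trans subCD subD.
move=> x xC; apply/negPn/negP => depCx.
suff : #|C| <= #|C :\ x| by rewrite (cardsD1 x C) xC ltnn.
by apply: minC; rewrite depCx (subset_trans (subsetDl _ _) subCD).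
Qed.

Definition closure M C := [set x in M.1 | rk M (x |: C) == rk M C].

Lemma sub_closure M C : C \subset M.1 -> C \subset closure M C.
Proof.
move=> subC; apply/subsetP => x xC.
by rewrite inE (subsetP subC) //= (setUidPr _) // sub1set.
Qed.

Section Matroid.
Variable M : mat U.
Hypothesis matM : is_matroid M.

Lemma indep_sub_ground A : A \in M.2 -> A \subset M.1.
Proof. by case: matM => sub _ _ _; apply: sub. Qed.

Lemma indep0 : set0 \in M.2.
Proof. by case: matM. Qed.

Lemma indep_subset A B : B \in M.2 -> A \subset B -> A \in M.2.
Proof. by case: matM => _ _ down _; apply: down. Qed.

Lemma indep_augment A B : A \in M.2 -> B \in M.2 -> #|A| < #|B| ->
  exists2 x, x \in B :\: A & x |: A \in M.2.
Proof. by case: matM => _ _ _ aug; apply: aug. Qed.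

Lemma indep_extend J Y : J \in M.2 -> J \subset Y ->
  exists2 K, [/\ K \in M.2, J \subset K & K \subset Y] & #|K| = rk M Y.
Proof.
move=> indJ subJY.
have [|K /and3P[indK subJK subKY] maxK] :=
  @arg_maxnP _ J (fun K => [&& K \in M.2, J \subset K & K \subset Y]) (fun K => #|K|).
  by rewrite indJ subxx subJY.
exists K => //; apply/eqP; rewrite eqn_leq indep_leq_rk //=.
have [indB subBY <-] := basis_spec Y indep0.
rewrite leqNgt; apply/negP => ltKB.
have [x /setDP[xB xK] indxK] := indep_augment indK indB ltKB.
suff : #|x |: K| <= #|K| by rewrite cardsU1 xK ltnn.
apply: maxK; rewrite indxK (subset_trans subJK (subsetUr _ _)) subUset sub1set.
by rewrite (subsetP subBY) // subKY.
Qed.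

Lemma rk_dependent A : A \notin M.2 -> rk M A < #|A|.
Proof.
move=> depA; rewrite ltn_neqAle rk_leq_card andbT; apply: contra depA => /eqP eqA.
by rewrite -(nullity_eq0 _ indep0) /nullity eqA subnn.
Qed.

Lemma rk_setU_closure C A X : C \subset A -> X \subset closure M C ->
  rk M (A :|: X) = rk M A.
Proof.
move=> subCA subX; apply/eqP; rewrite eqn_leq [rk M A <= _]subset_leq_rk ?subsetUl // andbT.
have [indBC subBC cardBC] := basis_spec C indep0.
have [J [indJ subBCJ subJA] cardJ] := indep_extend indBC (subset_trans subBC subCA).
have [indB subB <-] := basis_spec (A :|: X) indep0.
rewrite -cardJ leqNgt; apply/negP => ltJB.
have [x /setDP[xB xJ] indxJ] := indep_augment indJ indB ltJB.
move/subsetP: subB => /(_ x xB); rewrite inE => /orP[xA|xX].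
  have subxJ : x |: J \subset A by rewrite subUset sub1set xA subJA.
  by have := indep_leq_rk indxJ subxJ; rewrite -cardJ cardsU1 xJ ltnn.
have xBC : x \notin basis M C by apply: contra xJ; apply: (subsetP subBCJ).
have := indep_leq_rk (indep_subset indxJ (setUS [set x] subBCJ)) (setUS [set x] subBC).
move/subsetP: subX => /(_ x xX); rewrite inE => /andP[_ /eqP ->].
by rewrite cardsU1 xBC -cardBC ltnn.
Qed.

Lemma rk_closure C : C \subset M.1 -> rk M (closure M C) = rk M C.
Proof.
move=> subC; rewrite -(rk_setU_closure (subxx C) (subxx _)).
by rewrite (setUidPr (sub_closure subC)).
Qed.

Lemma flat_closure C : C \subset M.1 -> flat M (closure M C).
Proof.
move=> subC; split; first by apply/subsetP => x; rewrite inE => /andP[].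
move=> x /setDP[xE xcl]; rewrite rk_closure //.
apply: (@leq_trans (rk M (x |: C))); last exact/subset_leq_rk/setUS/sub_closure.
rewrite ltn_neqAle subset_leq_rk ?subsetUr // andbT eq_sym.
by apply: contra xcl => eqx; rewrite inE xE.
Qed.

Lemma cyclic_closure_circuit C : circuit M C -> cyclic M (closure M C).
Proof.
move=> circC x xcl; have [subC _ _] := circC.
have [xC|xC] := boolP (x \in C); first by exists C; split; rewrite ?sub_closure.
have [indB subB cardB] := basis_spec C indep0.
have xB : x \notin basis M C by apply: contra xC; apply: (subsetP subB).
have xE : x \in M.1 by move: xcl; rewrite inE => /andP[].
have dep_xB : x |: basis M C \notin M.2.
  apply/negP => ind_xB; have := indep_leq_rk ind_xB (setUS [set x] subB).
  by move: xcl; rewrite inE => /andP[_ /eqP ->]; rewrite cardsU1 xB cardB ltnn.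
have sub_xB : x |: basis M C \subset M.1.
  by rewrite subUset sub1set xE (subset_trans subB subC).
have [C' circC' subC'] := dependent_circuit sub_xB dep_xB.
exists C'; split=> //.
  apply/negPn/negP => xC'; have [_ /negP depC' _] := circC'; apply: depC'.
  apply: indep_subset indB _; apply/subsetP => y yC'.
  have := subsetP subC' y yC'; rewrite !inE => /orP[/eqP yx|//].
  by move: xC'; rewrite -yx yC'.
apply: subset_trans subC' _; rewrite subUset sub1set xcl.
exact: subset_trans subB (sub_closure subC).
Qed.

Lemma cyclic_flat_closure_circuit C : circuit M C -> cyclic_flat M (closure M C).
Proof.
move=> circC; split; last exact: cyclic_closure_circuit.
by case: circC => subC _ _; apply: flat_closure.
Qed.

Lemma rk_setD1_circuit C Z t : circuit M C -> t \in C -> C \subset Z ->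
  rk M (Z :\ t) = rk M Z.
Proof.
move=> [subC depC indCt] tC subCZ.
have tcl : [set t] \subset closure M (C :\ t).
  rewrite sub1set inE (subsetP subC) //= setD1K // eqn_leq.
  rewrite [rk M (C :\ t) <= _]subset_leq_rk ?subsetDl // andbT (rk_indep (indCt t tC)).
  by have := rk_dependent depC; rewrite (cardsD1 t C) tC.
have := rk_setU_closure (setSD [set t] subCZ) tcl.
by rewrite setUC setD1K // (subsetP subCZ).
Qed.

Lemma nonuniform_proper_cyclic_flat : ~ uniform M ->
  exists Z, [/\ cyclic_flat M Z, Z != set0 & Z != M.1].
Proof.
move=> nunifM; apply: NNPP => noZ; apply: nunifM; exists (rk M M.1).
apply/setP => A; rewrite inE; apply/idP/andP => [indA|[subA leA]].
  by rewrite indep_sub_ground ?indep_leq_rk ?indep_sub_ground.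
apply/negPn/negP => depA; have [C circC subCA] := dependent_circuit subA depA.
have [subC depC _] := circC.
have clC_E : closure M C = M.1.
  apply/eqP; apply: contra_notT noZ => neqE; exists (closure M C); split=> //.
    exact: cyclic_flat_closure_circuit.
  apply: contraNneq depC => /eqP; rewrite -subset0 => /(subset_trans (sub_closure subC)).
  by rewrite subset0 => /eqP ->; exact: indep0.
have := rk_dependent depC; rewrite -rk_closure // clC_E.
by have := subset_leq_card subCA; lia.
Qed.

End Matroid.

Definition restriction M X : mat U := (X, [set A : {set U} in M.2 | A \subset X]).

Definition contraction M X : mat U :=
  (M.1 :\: X, [set A : {set U} | (A \subset M.1 :\: X) && (A :|: basis M X \in M.2)]).

Section RestrictionContraction.
Variables (M : mat U) (X : {set U}).
Hypotheses (matM : is_matroid M) (subX : X \subset M.1).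

Lemma restriction_matroid : is_matroid (restriction M X).
Proof.
split=> /= [A|||A B]; rewrite ?inE.
- by case/andP.
- by rewrite indep0 ?sub0set.
- move=> A B; rewrite !inE => /andP[indB subB] subAB.
  by rewrite (indep_subset matM indB subAB) (subset_trans subAB subB).
- move=> /andP[indA subA] /andP[indB subB] ltAB.
  have [x xBA indxA] := indep_augment matM indA indB ltAB.
  exists x; rewrite // inE indxA subUset subA sub1set andbT.
  by case/setDP: xBA => xB _; apply: (subsetP subB).
Qed.

Lemma rk_restriction Y : Y \subset X -> rk (restriction M X) Y = rk M Y.
Proof.
move=> subY; apply: eq_bigl => B; rewrite inE -andbA.
have [subBY|] := boolP (B \subset Y); last by rewrite !andbF.
by rewrite (subset_trans subBY subY).
Qed.

Lemma card_setU_basis A : A \subset M.1 :\: X ->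
  #|A :|: basis M X| = #|A| + #|basis M X|.
Proof.
have [_ subB _] := basis_spec X (indep0 matM).
by rewrite subsetD => /andP[_ disjAX]; rewrite cardsU_disjoint // (disjointWr subB).
Qed.

Lemma contraction_matroid : is_matroid (contraction M X).
Proof.
have [indB _ _] := basis_spec X (indep0 matM).
split=> /= [A|||A B]; rewrite ?inE.
- by case/andP.
- by rewrite sub0set set0U indB.
- move=> A B; rewrite !inE => /andP[subB indBB] subAB.
  by rewrite (subset_trans subAB subB) (indep_subset matM indBB) ?setSU.
- move=> /andP[subA indAB] /andP[subB indBB] ltAB.
  have [|x] := indep_augment matM indAB indBB; first by rewrite !card_setU_basis ?ltn_add2r.
  rewrite !inE negb_or => /andP[/andP[xA xbasis] /orP[xB|]]; last by rewrite (negbTE xbasis).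
  exists x; first by rewrite inE xB xA.
  by rewrite inE subUset sub1set (subsetP subB) // subA -setUA.
Qed.

Lemma rk_contraction Y : Y \subset M.1 :\: X ->
  rk (contraction M X) Y + rk M X = rk M (Y :|: X).
Proof.
move=> subY; have [indB subB cardB] := basis_spec X (indep0 matM).
apply/eqP; rewrite eqn_leq; apply/andP; split.
  have [|] := basis_spec Y (_ : set0 \in (contraction M X).2).
    by rewrite inE sub0set set0U.
  rewrite inE => /andP[subA indAB] subAY <-; rewrite -cardB -card_setU_basis //.
  exact: indep_leq_rk indAB (setUSS subAY subB).
have [K [indK subBK subKY] <-] := indep_extend matM indB (subset_trans subB (subsetUr Y X)).
have KX : K :&: X = basis M X.
  apply/eqP; rewrite eq_sym eqEcard subsetI subBK subB cardB.
  exact: indep_leq_rk (indep_subset matM indK (subsetIl K X)) (subsetIr K X).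
rewrite -(cardsID X K) KX cardB addnC leq_add2r.
apply: indep_leq_rk; last first.
  by apply/subsetP => x /setDP[xK xX]; move: (subsetP subKY x xK); rewrite inE (negbTE xX) orbF.
rewrite inE -KX setUC setID indK andbT.
exact: setSD _ (indep_sub_ground matM indK).
Qed.

Hypothesis comparableX : forall Z, cyclic_flat M Z -> (Z \subset X) || (X \subset Z).

Lemma rk_setU_dependent A : A \subset M.1 -> A \notin M.2 -> A :&: X \in M.2 ->
  rk M (A :|: X) = rk M A.
Proof.
move=> subA depA indAX; have [C circC subCA] := dependent_circuit subA depA.
apply: (rk_setU_closure matM subCA).
have [subC depC _] := circC.
case/orP: (comparableX (cyclic_flat_closure_circuit matM circC)) => // clX.
case/negP: depC; apply: (indep_subset matM indAX).
by rewrite subsetI subCA (subset_trans (sub_closure subC) clX).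
Qed.

Lemma free_product_restriction_contraction :
  free_product (restriction M X) (contraction M X) = M.
Proof.
have ground : X :|: M.1 :\: X = M.1 by rewrite -{1}(setIidPr subX) setID.
rewrite [RHS]surjective_pairing /free_product /= ground; congr pair.
apply/setP => A; rewrite inE /lambda /rkM /= rk_restriction // rk_restriction ?subsetIr //.
have [subA|nsubA] := boolP (A \subset M.1); last first.
  by apply/esym; apply: contraNF nsubA => /(indep_sub_ground matM).
have -> : A :&: (M.1 :\: X) = A :\: X.
  by rewrite setIDA (setIidPl subA).
rewrite /= inE subsetIr andbT /nullity.
have rkAX := rk_contraction (setSD X subA).
have cardA := cardsID X A.
have leq_rkA : rk M A <= rk M (A :\: X :|: X).
  by apply: subset_leq_rk; apply/subsetP => x xA; rewrite !inE xA andbT orNb.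
have leq_rkAX : rk M (A :\: X :|: X) <= rk M (A :|: X) by apply/subset_leq_rk/setSU/subsetDl.
apply/andP/idP => [[indAX leA]|indA].
  have le_AX := indep_leq_rk indAX (subsetIr A X).
  rewrite (rk_indep indAX) in leA; apply/negPn/negP => depA.
  have := rk_dependent matM depA; rewrite -(rk_setU_dependent subA depA indAX); lia.
have indAX := indep_subset matM indA (subsetIl A X).
by split=> //; rewrite (rk_indep indAX); move: leq_rkA; rewrite (rk_indep indA); lia.
Qed.

End RestrictionContraction.

Section FreeProduct.
Variables N Q : mat U.
(* Q need not be a matroid: in the application it is a tail of an iterated
   free product, and all that is used about it is that set0 is independent. *)
Hypotheses (matN : is_matroid N) (indQ0 : set0 \in Q.2) (disjNQ : [disjoint N.1 & Q.1]).
Local Notation S := N.1.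
Local Notation T := Q.1.
Local Notation NQ := (free_product N Q).

Lemma rk_free_product_leq Y :
  rk NQ Y <= minn (rk N (Y :&: S) + #|Y :&: T|) (rkM N + rk Q (Y :&: T)).
Proof.
apply/bigmax_leqP => A /andP[+ subAY]; rewrite inE => /and3P[subA indAS nullA].
rewrite (card_setI_disjointU subA disjNQ) leq_min.
have := indep_leq_rk indAS (setSI S subAY).
have := indep_leq_rk indAS (subsetIr A S).
have := subset_leq_card (setSI T subAY).
have := subset_leq_rk Q (setSI T subAY).
have := rk_leq_card Q (A :&: T).
by move: nullA; rewrite /nullity /lambda /rkM (rk_indep indAS); lia.
Qed.

Lemma rk_free_product Y : Y \subset S :|: T ->
  rk NQ Y = minn (rk N (Y :&: S) + #|Y :&: T|) (rkM N + rk Q (Y :&: T)).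
Proof.
move=> subY; apply/eqP; rewrite eqn_leq rk_free_product_leq /=.
(* Witness: bases A of Y :&: S and B of Y :&: T, with B padded by further points
   V of Y :&: T, as many as the slack rho(N) - |A| allows. *)
have [indA subA <-] := basis_spec (Y :&: S) (indep0 matN).
have [indB subB <-] := basis_spec (Y :&: T) indQ0.
set A := basis N _ in indA subA *; set B := basis Q _ in indB subB *.
have [|V] := @exists_subset_card ((Y :&: T) :\: B) (minn (#|Y :&: T| - #|B|) (rkM N - #|A|)).
  by rewrite cardsD (setIidPr subB) geq_minl.
rewrite subsetD => /andP[subV disjVB] cardV.
have cardBV : #|B :|: V| = #|B| + #|V| by rewrite cardsU_disjoint // disjoint_sym.
have subAS : A \subset S := subset_trans subA (subsetIr Y S).
have subBVT : B :|: V \subset Y :&: T by rewrite subUset subB.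
have subBV_T : B :|: V \subset T := subset_trans subBVT (subsetIr Y T).
have AS : (A :|: (B :|: V)) :&: S = A := setIUl_disjoint disjNQ subAS subBV_T.
have AT : (A :|: (B :|: V)) :&: T = B :|: V.
  by rewrite setUC (setIUl_disjoint _ subBV_T subAS) // disjoint_sym.
have indABV : A :|: (B :|: V) \in NQ.2.
  rewrite inE AS AT indA setUSS //= /nullity /lambda (rk_indep indA).
  have leV : #|V| <= rkM N - #|A| by rewrite cardV geq_minr.
  by rewrite cardBV leq_subLR leq_add // indep_leq_rk // subsetUl.
have subABV : A :|: (B :|: V) \subset Y.
  by rewrite subUset (subset_trans subA (subsetIl _ _)) (subset_trans subBVT (subsetIl _ _)).
have := indep_leq_rk indABV subABV.
rewrite (card_setI_disjointU (_ : _ \subset S :|: T) disjNQ) ?AS ?AT ?setUSS //.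
have leBz : #|B| <= #|Y :&: T| := subset_leq_card subB.
have leAr : #|A| <= rkM N := indep_leq_rk indA subAS.
by rewrite cardBV cardV !addn_minr (subnKC leBz) addnCA (subnKC leAr) [#|B| + _]addnC.
Qed.

Lemma cyclic_flat_free_product Z : is_matroid NQ -> cyclic_flat NQ Z ->
  (Z \subset S) || (S \subset Z).
Proof.
move=> matNQ [[subZ flatZ] cycZ].
apply/negPn/negP; rewrite negb_or => /andP[/subsetPn[t tZ tS] /subsetPn[s sS sZ]].
have tT : t \in T by move/subsetP: subZ => /(_ t tZ); rewrite inE (negbTE tS).
have [C [circC tC subCZ]] := cycZ t tZ.
have rkZt := rk_setD1_circuit matNQ circC tC subCZ.
have ltZt : rk NQ (Z :\ t) < rk N (Z :&: S) + #|Z :&: T|.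
  apply: leq_ltn_trans (rk_free_product_leq _) _; apply: leq_ltn_trans (geq_minl _ _) _.
  apply: leq_ltn_trans (leq_add (subset_leq_rk N (setSI S (subsetDl Z [set t]))) (leqnn _)) _.
  by rewrite ltn_add2l setIDAC proper_card // properD1 // inE tZ tT.
have ltZs : rk NQ Z < rkM N + rk Q (Z :&: T).
  have sE : s \in NQ.1 :\: Z by rewrite !inE sZ sS.
  have sZT : (s |: Z) :&: T = Z :&: T.
    by rewrite setIUl disjoint_setI0 ?set0U // disjoints1 (disjointFr disjNQ sS).
  apply: leq_trans (flatZ s sE) _; apply: leq_trans (rk_free_product_leq _) _.
  by rewrite sZT geq_minr.
have : rk NQ Z < minn (rk N (Z :&: S) + #|Z :&: T|) (rkM N + rk Q (Z :&: T)).
  by rewrite leq_min ltZs -rkZt ltZt.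
by rewrite -rk_free_product ?ltnn.
Qed.

End FreeProduct.

Lemma complete_sublattice_comparable E S : S \subset E ->
  complete_sublattice E [set Y : {set U} | (Y \subset E) && ((Y \subset S) || (S \subset Y))].
Proof.
move=> subSE; set F := [set Y | _].
have memF P Y : P \subset F -> Y \in P -> (Y \subset E) && ((Y \subset S) || (S \subset Y)).
  by move=> /subsetP subP /subP; rewrite inE.
split=> [Y|P subP|P subP]; rewrite inE; first by case/andP.
  rewrite (_ : \bigcup_(Y in P) Y \subset E); last first.
    by apply/bigcupsP => Y /(memF P Y subP)/andP[].
  have [/exists_inP[Y PY subSY]|/exists_inPn noY] := boolP [exists Y in P, S \subset Y].
    by rewrite (subset_trans subSY (bigcup_sup Y PY)) orbT.
  apply/orP; left; apply/bigcupsP => Y PY.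
  by case/andP: (memF P Y subP PY) => _ /orP[//|subSY]; case/negP: (noY Y PY).
rewrite subsetIl /=.
have [/exists_inP[Y PY subYS]|/exists_inPn noY] := boolP [exists Y in P, Y \subset S].
  by rewrite (subset_trans (subsetIr _ _) (subset_trans (bigcap_inf Y PY) subYS)).
apply/orP; right; rewrite subsetI subSE; apply/bigcapsP => Y PY.
by case/andP: (memF P Y subP PY) => _ /orP[subYS|//]; case/negP: (noY Y PY).
Qed.

Definition asbool (P : Prop) : bool :=
  if excluded_middle_informative P then true else false.

Lemma asboolP (P : Prop) : reflect P (asbool P).
Proof. by rewrite /asbool; case: excluded_middle_informative => ?; constructor. Qed.

Section Lattice.
Variable M : mat U.

Lemma cyclic_flat_inD F : cyclic_flat M F -> inD M F.
Proof. by move=> cfF Fam _; apply. Qed.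

Lemma inD_bigcup P : {in P, forall Y, inD M Y} -> inD M (\bigcup_(Y in P) Y).
Proof.
move=> inDP Fam latFam cfFam; case: (latFam) => _ cupFam _; apply: cupFam.
by apply/subsetP => Y /inDP/(_ Fam latFam cfFam).
Qed.

Lemma inD_bigcap P : {in P, forall Y, inD M Y} -> inD M (M.1 :&: \bigcap_(Y in P) Y).
Proof.
move=> inDP Fam latFam cfFam; case: (latFam) => _ _ capFam; apply: capFam.
by apply/subsetP => Y /inDP/(_ Fam latFam cfFam).
Qed.

Lemma inD0 : inD M set0.
Proof. by have := @inD_bigcup set0; rewrite big_set0; apply=> Y; rewrite inE. Qed.

Lemma inD_ground : inD M M.1.
Proof. by have := @inD_bigcap set0; rewrite big_set0 setIT; apply=> Y; rewrite inE. Qed.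

Lemma inD_sub_ground X : inD M X -> X \subset M.1.
Proof.
rewrite -powersetE; apply; last by move=> F [[subF _] _]; rewrite powersetE.
split=> [Y|P subP|P _]; rewrite powersetE ?subsetIl //.
by apply/bigcupsP => Y /(subsetP subP); rewrite powersetE.
Qed.

Lemma inD_comparable S : S \subset M.1 ->
  (forall Z, cyclic_flat M Z -> (Z \subset S) || (S \subset Z)) ->
  forall Y, inD M Y -> (Y \subset S) || (S \subset Y).
Proof.
move=> subS compS Y inDY.
suff : Y \in [set Y : {set U} | (Y \subset M.1) && ((Y \subset S) || (S \subset Y))].
  by rewrite inE => /andP[].
apply: inDY (complete_sublattice_comparable subS) _ => Z cfZ.
by rewrite inE compS // andbT; case: cfZ => [[]].
Qed.

Lemma inD_max_below S : exists X,
  [/\ inD M X, X \subset S & forall Y, inD M Y -> Y \subset S -> Y \subset X].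
Proof.
exists (\bigcup_(Y in [set Y : {set U} | asbool (inD M Y) && (Y \subset S)]) Y); split.
- by apply: inD_bigcup => Y; rewrite inE => /andP[/asboolP].
- by apply/bigcupsP => Y; rewrite inE => /andP[].
- by move=> Y inDY subYS; apply: bigcup_sup; rewrite inE subYS andbT; apply/asboolP.
Qed.

Lemma inD_min_above S : S \subset M.1 -> exists X,
  [/\ inD M X, S \subset X & forall Y, inD M Y -> S \subset Y -> X \subset Y].
Proof.
move=> subS.
exists (M.1 :&: \bigcap_(Y in [set Y : {set U} | asbool (inD M Y) && (S \subset Y)]) Y); split.
- by apply: inD_bigcap => Y; rewrite inE => /andP[/asboolP].
- by rewrite subsetI subS; apply/bigcapsP => Y; rewrite inE => /andP[].
- move=> Y inDY subSY; apply: subset_trans (subsetIr _ _) (bigcap_inf Y _).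
  by rewrite inE subSY andbT; apply/asboolP.
Qed.

Lemma nontrivial_pinchpointE X : nontrivial_pinchpoint M X <->
  [/\ inD M X, forall Y, inD M Y -> (Y \subset X) || (X \subset Y),
      X != set0 & X != M.1].
Proof.
split=> [[inDX compX [Y _ YX] [Y' inDY' XY']] | [inDX compX X0 XE]].
  split=> //; first by apply: contraTneq YX => ->; rewrite properE sub0set andbF.
  by apply: contraTneq XY' => ->; rewrite properE inD_sub_ground ?andbF.
split=> //; first by exists set0; rewrite ?proper0 //; apply: inD0.
by exists M.1; rewrite ?properEneq ?XE ?inD_sub_ground //; apply: inD_ground.
Qed.

Lemma nontrivial_pinchpoint_of_comparable S Z : S != set0 -> S \proper M.1 ->
  (forall Y, inD M Y -> (Y \subset S) || (S \subset Y)) ->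
  inD M Z -> Z != set0 -> Z != M.1 -> exists X, nontrivial_pinchpoint M X.
Proof.
move=> S0 properS compS inDZ Z0 ZE.
case/orP: (compS Z inDZ) => [subZS|subSZ].
  have [X [inDX subXS maxX]] := inD_max_below S.
  exists X; apply/nontrivial_pinchpointE; split=> //.
  - move=> Y inDY; case/orP: (compS Y inDY) => [/(maxX _ inDY) -> // | subSY].
    by rewrite (subset_trans subXS subSY) orbT.
  - by apply: contraNneq Z0 => X0; rewrite -subset0 -X0; apply: maxX.
  - by apply: contraTneq properS => XE; rewrite properE -XE subXS andbF.
have [X [inDX subSX minX]] := inD_min_above (proper_sub properS).
exists X; apply/nontrivial_pinchpointE; split=> //.
- move=> Y inDY; case/orP: (compS Y inDY) => [subYS | /(minX _ inDY) ->]; last by rewrite orbT.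
  by rewrite (subset_trans subYS subSX).
- by apply: contraNneq S0 => X0; rewrite -subset0 -X0.
- by apply: contraNneq ZE => XE; rewrite eqEsubset inD_sub_ground //= -XE minX.
Qed.

End Lattice.

Lemma free_product_empty_r N Q : Q.1 = set0 -> (forall A, A \in N.2 -> A \subset N.1) ->
  free_product N Q = N.
Proof.
case: N => E I Q0 /= subI; rewrite /free_product /= Q0 setU0; congr pair.
apply/setP => A; rewrite inE setI0 /nullity cards0 /=.
have [subA|nsubA] := boolP (A \subset E); first by rewrite (setIidPl subA) andbT.
by apply/esym; apply: contraNF nsubA => /subI.
Qed.

Lemma free_product_empty_l Q : set0 \in Q.2 -> (forall A, A \in Q.2 -> A \subset Q.1) ->
  free_product (empty_mat U) Q = Q.
Proof.
case: Q => E I indQ0 /= subI; rewrite /free_product /= set0U; congr pair.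
apply/setP => A; rewrite inE setI0 inE eqxx /lambda subnn leqn0.
have [subA|nsubA] := boolP (A \subset E); first by rewrite (setIidPl subA) (nullity_eq0 _ indQ0).
by apply/esym; apply: contraNF nsubA => /subI.
Qed.

Lemma free_product_seq_indep_sub s A :
  A \in (free_product_seq s).2 -> A \subset (free_product_seq s).1.
Proof. by case: s => [|N s]; rewrite inE; [move/eqP -> | case/and3P]. Qed.

Lemma free_product_seq_indep0 s : (forall N, N \in s -> is_matroid N) ->
  set0 \in (free_product_seq s).2.
Proof.
case: s => [|N s] mats; rewrite /= inE //.
have matN : is_matroid N by apply: mats; rewrite mem_head.
by rewrite sub0set !set0I (indep0 matN) /nullity cards0.
Qed.

Lemma free_product_seq_split s M : (forall N, N \in s -> is_matroid N) ->
  disjoint_grounds s -> free_product_seq s = M -> M.1 != set0 -> M \notin s ->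
  exists N Q, [/\ is_matroid N, (N.1 != set0) && (Q.1 != set0),
    [disjoint N.1 & Q.1], set0 \in Q.2 & free_product N Q = M].
Proof.
elim: s => [|N s IH] mats /=; first by move=> _ <-; rewrite eqxx.
move=> [disjN disjs] prodM M0; rewrite inE negb_or => /andP[MN Ms].
have matN : is_matroid N by apply: mats; rewrite mem_head.
have mats' N' : N' \in s -> is_matroid N' by move=> N's; apply: mats; rewrite inE N's orbT.
have [N0|N0] := eqVneq N.1 set0.
  have emptyN : N = empty_mat U.
    case: N matN N0 {mats disjN prodM MN} => E I matN /= E0; congr pair; first by [].
    apply/setP => A; rewrite inE; apply/idP/eqP => [indA|->]; last exact: indep0 matN.
    by apply/eqP; rewrite -subset0 -E0 (indep_sub_ground matN indA).
  apply: IH => //; rewrite -prodM emptyN free_product_empty_l //.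
    exact: free_product_seq_indep0.
  exact: free_product_seq_indep_sub.
have [P0|P0] := eqVneq (free_product_seq s).1 set0.
  by move: MN; rewrite -prodM free_product_empty_r ?eqxx //; apply: indep_sub_ground.
exists N, (free_product_seq s); split=> //; first by rewrite N0 P0.
exact: free_product_seq_indep0.
Qed.

Lemma nontrivial_pinchpoint_not_irreducible M X :
  is_matroid M -> nontrivial_pinchpoint M X -> ~ irreducible M.
Proof.
move=> matM /nontrivial_pinchpointE[inDX compX X0 XE] [_ irrM].
have subX := inD_sub_ground inDX.
have compcf Z : cyclic_flat M Z -> (Z \subset X) || (X \subset Z).
  by move=> cfZ; exact: compX (cyclic_flat_inD cfZ).
have matC : is_matroid (contraction M X) := contraction_matroid X matM.
set s := [:: restriction M X; contraction M X].
have mats N : N \in s -> is_matroid N.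
  by rewrite !inE => /orP[]/eqP ->; [exact: restriction_matroid | exact: matC].
have disjs : disjoint_grounds s.
  split; first by rewrite /= setU0 disjoint_sym disjoints_subset setDE subsetIr.
  by split; rewrite //= disjoints_subset setC0 subsetT.
have prodM : free_product_seq s = M.
  rewrite /= [free_product (contraction M X) _]free_product_empty_r //; last by case: matC.
  exact: free_product_restriction_contraction.
have := irrM s mats disjs prodM; rewrite !inE => /orP[]/eqP/(congr1 fst) /= EX.
  by rewrite EX eqxx in XE.
case/negP: X0; rewrite -subset0; apply/subsetP => x xX.
by move: (subsetP subX x xX); rewrite EX inE xX.
Qed.

Lemma free_product_nontrivial_pinchpoint M N Q : is_matroid M -> ~ uniform M ->
  is_matroid N -> set0 \in Q.2 -> [disjoint N.1 & Q.1] ->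
  N.1 != set0 -> Q.1 != set0 -> free_product N Q = M ->
  exists X, nontrivial_pinchpoint M X.
Proof.
move=> matM nunifM matN indQ0 disjNQ N0 Q0 NQM.
have [Z [cfZ Z0 ZE]] := nonuniform_proper_cyclic_flat matM nunifM.
have properN : N.1 \proper M.1.
  have [t tQ] := set0Pn _ Q0.
  rewrite -NQM properE subsetUl; apply/subsetPn; exists t; first by rewrite inE tQ orbT.
  by rewrite (disjointFl disjNQ tQ).
apply: (nontrivial_pinchpoint_of_comparable N0 properN _ (cyclic_flat_inD cfZ) Z0 ZE).
apply: (inD_comparable (proper_sub properN)) => Z' cfZ'.
by apply: (cyclic_flat_free_product matN indQ0 disjNQ); rewrite NQM.
Qed.

End Matroids.

Theorem theorem6p11 (U : finType) (M : mat U) :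
  is_matroid M -> ~ uniform M ->
  (irreducible M <-> ~ (exists X : {set U}, nontrivial_pinchpoint M X)).
Proof.
move=> matM nunifM; split=> [irrM [X pinchX] | noPinch].
  exact: nontrivial_pinchpoint_not_irreducible matM pinchX irrM.
have [Z [[[subZ _] _] Z0 _]] := nonuniform_proper_cyclic_flat matM nunifM.
have M0 : M.1 != set0.
  by apply: contraNneq Z0 => E0; rewrite -subset0 -E0.
split=> // s mats disjs prodM; apply/negPn/negP => Ms.
have [N [Q [matN /andP[N0 Q0] disjNQ indQ0 NQM]]] :=
  free_product_seq_split mats disjs prodM M0 Ms.
apply: noPinch.
exact: free_product_nontrivial_pinchpoint matM nunifM matN indQ0 disjNQ N0 Q0 NQM.
Qed.
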